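(* Let $(\mathcal{X},\rho)$ be a metric space, let $L>0$, and let $\mathcal{F}$ be the collection of all functions $f:\mathcal{X}\to\mathbb{R}$ with Lipschitz constant at most $L$. Then for every $\gamma>0$, $\mathrm{fat}_\gamma(\mathcal{F})=\mathrm{fat}^0_\gamma(\mathcal{F})$.
   Context: For a collection $\mathcal{F}$ of functions $\mathcal{X}\to\mathbb{R}$ and $\gamma>0$: a finite set $X\subset\mathcal{X}$ is $\gamma$-shattered by $\mathcal{F}$ if there exists $r:X\to\mathbb{R}$ such that for every labeling $y\in\{-1,1\}^X$ there is $f\in\mathcal{F}$ with $y(x)(f(x)-r(x))\ge\gamma$ for all $x\in X$. The set $X$ is $\gamma$-shattered at zero by $\mathcal{F}$ if this holds with $r\equiv 0$, i.e. for every $y\in\{-1,1\}^X$ there is $f\in\mathcal{F}$ with $y(x)f(x)\ge\gamma$ for all $x\in X$. $\mathrm{fat}_\gamma(\mathcal{F})$ (the $\gamma$-fat-shattering dimension) is the largest cardinality of a set $\gamma$-shattered by $\mathcal{F}$, and $\mathrm{fat}^0_\gamma(\mathcal{F})$ is the largest cardinality of a set $\gamma$-shattered at zero by $\mathcal{F}$. The Lipschitz constant of $f$ is the smallest $L\ge 0$ with $|f(x)-f(x')|\le L\rho(x,x')$ for all $x,x'$. *)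

From Stdlib Require Import Reals List.
Import ListNotations.
Open Scope R_scope.

Definition is_metric {X : Type} (rho : X -> X -> R) : Prop :=
  (forall x y, 0 <= rho x y) /\
  (forall x y, rho x y = 0 <-> x = y) /\
  (forall x y, rho x y = rho y x) /\
  (forall x y z, rho x z <= rho x y + rho y z).

(* f has Lipschitz constant at most L (the smallest valid constant is <= L
   iff L itself is a valid constant, since the set of valid constants is closed) *)
Definition lipschitz_le {X : Type} (rho : X -> X -> R) (L : R) (f : X -> R) : Prop :=
  forall x x', Rabs (f x - f x') <= L * rho x x'.

Definition LipClass {X : Type} (rho : X -> X -> R) (L : R) : (X -> R) -> Prop :=
  fun f => lipschitz_le rho L f.

Definition labeling {X : Type} (S : list X) (y : X -> R) : Prop :=
  forall x, In x S -> y x = 1 \/ y x = -1.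

Definition shattered {X : Type} (F : (X -> R) -> Prop) (gamma : R) (S : list X) : Prop :=
  exists r : X -> R, forall y : X -> R, labeling S y ->
    exists f, F f /\ forall x, In x S -> y x * (f x - r x) >= gamma.

Definition shattered0 {X : Type} (F : (X -> R) -> Prop) (gamma : R) (S : list X) : Prop :=
  forall y : X -> R, labeling S y ->
    exists f, F f /\ forall x, In x S -> y x * f x >= gamma.

(* d is the largest cardinality of a finite set satisfying Sh;
   d = None encodes +infinity (arbitrarily large such sets exist). *)
Definition is_max_card {X : Type} (Sh : list X -> Prop) (d : option nat) : Prop :=
  match d with
  | Some n => (exists S, NoDup S /\ length S = n /\ Sh S) /\
              (forall S, NoDup S -> Sh S -> (length S <= n)%nat)
  | None => forall n, exists S, NoDup S /\ length S = n /\ Sh S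
  end.

Definition is_fat {X : Type} (F : (X -> R) -> Prop) (gamma : R) (d : option nat) : Prop :=
  is_max_card (shattered F gamma) d.
Definition is_fat0 {X : Type} (F : (X -> R) -> Prop) (gamma : R) (d : option nat) : Prop :=
  is_max_card (shattered0 F gamma) d.

From Stdlib Require Import Reals List Lra ClassicalEpsilon.
Open Scope R_scope.

(* For the class F of L-Lipschitz functions, a finite set is
   gamma-shattered iff it is gamma-shattered at zero; both fat-shattering
   dimensions are then "largest cardinality" of the same family of sets.
   - Shattering at zero is shattering with the reference function r = 0,
     for any class of functions.
   - If S is gamma-shattered by F, then any two distinct points of S are
     gamma-separated: L * rho x x' >= 2 gamma (compare the two functions
     realizing the labelings that are +1 on exactly one of the two points).
   - Conversely, on a separated set every labeling y is realized at zero by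
     z |-> min(gamma, min_{x in S, y x = -1} (-gamma + L * rho z x)),
     which is L-Lipschitz as a finite minimum of L-Lipschitz functions. *)

Lemma is_max_card_iff {X : Type} (Sh1 Sh2 : list X -> Prop) :
  (forall S, Sh1 S <-> Sh2 S) -> forall d, is_max_card Sh1 d <-> is_max_card Sh2 d.
Proof.
  intros E [n|]; simpl.
  - split; intros [[S [Hnd [Hlen HS]]] Hmax]; split;
      try (exists S; repeat split; auto; apply E; auto);
      intros S' Hnd' HS'; apply Hmax; auto; apply E; auto.
  - split; intros H m; destruct (H m) as [S [Hnd [Hlen HS]]];
      exists S; repeat split; auto; apply E; auto.
Qed.

Lemma shattered0_shattered {X : Type} (F : (X -> R) -> Prop) gamma S :
  shattered0 F gamma S -> shattered F gamma S.
Proof.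
  intros H. exists (fun _ => 0). intros y Hy.
  destruct (H y Hy) as [f [Hf Hreal]].
  exists f. split; auto. intros x Hx. rewrite Rminus_0_r. auto.
Qed.

Lemma Rabs_Rmin_le a b c d K :
  Rabs (a - c) <= K -> Rabs (b - d) <= K -> Rabs (Rmin a b - Rmin c d) <= K.
Proof.
  intros H1 H2. unfold Rmin.
  destruct (Rle_dec a b), (Rle_dec c d);
    revert H1 H2; unfold Rabs; repeat destruct Rcase_abs; intros; lra.
Qed.

Section Lipschitz.
Variables (X : Type) (rho : X -> X -> R) (Hrho : is_metric rho).
Variables (L : R) (HL : 0 <= L).

Lemma lipschitz_const c : lipschitz_le rho L (fun _ => c).
Proof.
  destruct Hrho as [Hpos _]. intros z z'.
  replace (c - c) with 0 by ring. rewrite Rabs_R0.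
  apply Rmult_le_pos; auto.
Qed.

Lemma lipschitz_dist c x : lipschitz_le rho L (fun z => c + L * rho z x).
Proof.
  destruct Hrho as [_ [_ [Hsym Htri]]]. intros z z'.
  replace (c + L * rho z x - (c + L * rho z' x)) with (L * (rho z x - rho z' x))
    by ring.
  rewrite Rabs_mult, (Rabs_pos_eq L HL).
  apply Rmult_le_compat_l; auto.
  pose proof (Htri z z' x). pose proof (Htri z' z x). rewrite (Hsym z' z) in *.
  apply Rabs_le; lra.
Qed.

Definition list_min (g : X -> X -> R) (base : R) (S : list X) (z : X) : R :=
  fold_right (fun x acc => Rmin (g x z) acc) base S.

Lemma lipschitz_list_min g base S :
  (forall x, lipschitz_le rho L (g x)) -> lipschitz_le rho L (list_min g base S).
Proof.
  intros Hg z z'. induction S as [|x S IH]; simpl.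
  - exact (lipschitz_const base z z').
  - apply Rabs_Rmin_le; [apply Hg | exact IH].
Qed.

Lemma list_min_le g base S z x : In x S -> list_min g base S z <= g x z.
Proof.
  induction S as [|a S IH]; simpl; [tauto|].
  intros [<-|Hx]; [apply Rmin_l|].
  eapply Rle_trans; [apply Rmin_r|auto].
Qed.

Lemma list_min_ge g base S z m :
  m <= base -> (forall x, In x S -> m <= g x z) -> m <= list_min g base S z.
Proof.
  intros Hb. induction S as [|a S IH]; simpl; intros H; auto.
  apply Rmin_glb; auto.
Qed.

End Lipschitz.

Section Shattering.
Variables (X : Type) (rho : X -> X -> R) (Hrho : is_metric rho).
Variables (L gamma : R) (HL : 0 <= L).

Definition separated (S : list X) : Prop :=
  forall x x', In x S -> In x' S -> x <> x' -> 2 * gamma <= L * rho x x'.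

Definition point_labeling (a : X) (z : X) : R :=
  if excluded_middle_informative (z = a) then 1 else -1.

Lemma point_labeling_labeling S a : labeling S (point_labeling a).
Proof. intros z _. unfold point_labeling. destruct excluded_middle_informative; auto. Qed.

(* A set shattered by the L-Lipschitz class is separated: the functions
   realizing the point labelings at x and at x' differ by 2 gamma at both
   points, in opposite directions, so L * rho x x' >= 2 gamma. *)
Lemma shattered_separated S : shattered (LipClass rho L) gamma S -> separated S.
Proof.
  intros [r Hr] x x' Hx Hx' Hne.
  destruct (Hr _ (point_labeling_labeling S x)) as [f1 [Lf1 H1]].
  destruct (Hr _ (point_labeling_labeling S x')) as [f2 [Lf2 H2]].
  pose proof (H1 x Hx) as A1. pose proof (H1 x' Hx') as B1.
  pose proof (H2 x Hx) as A2. pose proof (H2 x' Hx') as B2.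
  revert A1 B1 A2 B2. unfold point_labeling.
  repeat destruct excluded_middle_informative; try congruence; intros.
  pose proof (Lf1 x x') as C1. pose proof (Lf2 x' x) as C2.
  destruct Hrho as [_ [_ [Hsym _]]]. rewrite Hsym in C2.
  pose proof (Rle_abs (f1 x - f1 x')). pose proof (Rle_abs (f2 x' - f2 x)).
  lra.
Qed.

Definition tent (y : X -> R) (x z : X) : R :=
  if Req_EM_T (y x) 1 then gamma else - gamma + L * rho z x.

Lemma tent_lipschitz y x : lipschitz_le rho L (tent y x).
Proof.
  intros z z'. unfold tent. destruct Req_EM_T.
  - exact (lipschitz_const X rho Hrho L HL gamma z z').
  - apply (lipschitz_dist X rho Hrho L HL (- gamma) x).
Qed.

Lemma separated_shattered0 S : separated S -> shattered0 (LipClass rho L) gamma S.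
Proof.
  intros Hsep y Hy. exists (list_min X (tent y) gamma S). split.
  { apply (lipschitz_list_min X rho Hrho L HL), tent_lipschitz. }
  destruct Hrho as [_ [Hzero _]].
  intros z Hz. destruct (Hy z Hz) as [E|E]; rewrite E.
  - (* labeled +1: every tent is at least gamma at z *)
    assert (Hmin : gamma <= list_min X (tent y) gamma S z); [|lra].
    apply list_min_ge; [lra|]. intros x Hx. unfold tent.
    destruct Req_EM_T as [_|Hneg]; [lra|].
    assert (Hzx : z <> x) by (intros <-; contradiction).
    specialize (Hsep z x Hz Hx Hzx). lra.
  - (* labeled -1: the tent centered at z itself equals -gamma there *)
    assert (Hcenter : tent y z z = - gamma).
    { unfold tent. destruct Req_EM_T; [lra|].
      rewrite (proj2 (Hzero z z) eq_refl). ring. }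
    pose proof (list_min_le X (tent y) gamma S z z Hz) as Hle. lra.
Qed.

Lemma shattered_iff_shattered0 S :
  shattered (LipClass rho L) gamma S <-> shattered0 (LipClass rho L) gamma S.
Proof.
  split.
  - intros H. apply separated_shattered0, shattered_separated, H.
  - apply shattered0_shattered.
Qed.

End Shattering.

Theorem mainTheorem1 (X : Type) (rho : X -> X -> R) (Hrho : is_metric rho)
  (L : R) (HL : 0 < L) (gamma : R) (Hg : 0 < gamma) :
  forall d : option nat,
    is_fat (LipClass rho L) gamma d <-> is_fat0 (LipClass rho L) gamma d.
Proof.
  apply is_max_card_iff. intros S.
  exact (shattered_iff_shattered0 X rho Hrho L gamma (Rlt_le _ _ HL) S).
Qed.
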